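(* Let $P\subseteq\mathbb{R}^n$ be a permutation-invariant polytope, $x'\in P$, and $\pi$ a permutation of $\{1,\dots,n\}$ with $x'_{\pi(i)}\ge x'_{\pi(i+1)}$ for all $i=1,\dots,n-1$. Then there exists $u'\in P$ with $u'\ge_m x'$ and $u'_\Delta\ne x'_\Delta$ if and only if there does not exist $a\in\mathbb{R}^n$ with $a_{\pi(i)}>a_{\pi(i+1)}$ for all $i=1,\dots,n-1$ such that the inequality $\sum_{i=1}^n a_i(x_i-x'_i)\le0$ holds for all $x\in P$.
   Context: $P$ is permutation-invariant if $x\in P$ implies $Qx\in P$ for every permutation matrix $Q$. $x_{[i]}$ is the $i$-th largest entry; $x\ge_m y$ means $\sum_{i=1}^j x_{[i]}\ge\sum_{i=1}^j y_{[i]}$ for $j<n$ with equality for $j=n$. $x_\Delta=(x_{[1]},\dots,x_{[n]})$. *)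

From HB Require Import structures.
From mathcomp Require Import all_boot all_order all_algebra all_fingroup.
Set Implicit Arguments. Unset Strict Implicit. Unset Printing Implicit Defensive.
Import Order.TTheory GRing.Theory Num.Theory.
Local Open Scope ring_scope.

Definition in_conv (R : realFieldType) (n : nat) (V : seq 'rV[R]_n) (x : 'rV[R]_n) : Prop :=
  exists w : 'I_(size V) -> R,
    (forall i, 0 <= w i) /\ \sum_(i < size V) w i = 1 /\
    x = \sum_(i < size V) w i *: V`_i.

Definition is_polytope (R : realFieldType) (n : nat) (P : 'rV[R]_n -> Prop) : Prop :=
  exists V : seq 'rV[R]_n, forall x, P x <-> in_conv V x.

Definition perm_invariant (R : realFieldType) (n : nat) (P : 'rV[R]_n -> Prop) : Prop :=
  forall x (s : 'S_n), P x -> P (col_perm s x).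

(* x_Delta : the entries of x sorted in nonincreasing order,
   so that (sortdesc x)`_(i-1) = x_[i] *)
Definition sortdesc (R : realFieldType) (n : nat) (x : 'rV[R]_n) : seq R :=
  sort (fun a b : R => b <= a) [seq x ord0 j | j <- enum 'I_n].

Definition majorizes (R : realFieldType) (n : nat) (x y : 'rV[R]_n) : Prop :=
  (forall j, (j < n)%N ->
     \sum_(i < j) (sortdesc y)`_i <= \sum_(i < j) (sortdesc x)`_i) /\
  \sum_(i < n) (sortdesc x)`_i = \sum_(i < n) (sortdesc y)`_i.

From HB Require Import structures.
From mathcomp Require Import all_boot all_order all_algebra all_fingroup.
From mathcomp Require Import ring lra.
From Stdlib Require Import Classical.
Set Implicit Arguments.
Unset Strict Implicit.
Unset Printing Implicit Defensive.

Import Order.TTheory GRing.Theory Num.Theory.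
Local Open Scope ring_scope.

(* If [u'] strictly majorizes [x'], rearrange it into [u''] sorted along [pi]; by
   summation by parts, [a . (u'' - x')] is the sum of the positive gaps
   [a_(pi i) - a_(pi (i+1))] weighted by the nonnegative, not all zero, differences
   of partial sums along [pi], hence positive, and [u''] lies in [P].
   Conversely, the required [a] is a solution [(a, t)] of the finite linear system
   [a . (v - x') <= 0] over the vertices [v] of [P], [a_(pi i) - a_(pi (i+1)) >= t],
   [t > 0].  If it has none, Farkas' lemma writes [-t] as a conic combination of
   the constraint forms; normalised, the weights on the vertices give a point
   [u] of [P] whose partial sums along [pi] dominate those of [x'], with equal
   total and [u <> x'], so [u] strictly majorizes [x']. *)

Section Farkas.
Variables (R : realFieldType) (V : lmodType R).

Definition in_cone (I : finType) (g : I -> V -> R) (f : V -> R) :=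
  exists2 mu : I -> R, (forall i, 0 <= mu i) & forall x, f x = \sum_i mu i * g i x.

Lemma scalar_ge0_eq0 (f : V -> R) : scalar f -> (forall x, 0 <= f x) -> forall x, f x = 0.
Proof.
move=> Lf f_ge0 x; have := f_ge0 ((-2) *: x + x); rewrite Lf.
have := f_ge0 x; lra.
Qed.

Lemma in_cone_lift m (g : 'I_m.+1 -> V -> R) (f : V -> R) (c : R) (mu : 'I_m -> R) :
  0 <= c -> (forall i, 0 <= mu i) ->
  (forall x, f x = c * g ord0 x + \sum_i mu i * g (lift ord0 i) x) -> in_cone g f.
Proof.
move=> c_ge0 mu_ge0 Ef.
exists (fun i => if unlift ord0 i is Some j then mu j else c).
  by move=> i; case: (unlift ord0 i).
move=> x; rewrite big_ord_recl unlift_none Ef.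
by congr (_ + _); apply: eq_bigr => i _; rewrite liftK.
Qed.

Lemma farkas_ord m (g : 'I_m -> V -> R) (f : V -> R) :
  (forall i, scalar (g i)) -> scalar f ->
  (forall x, (forall i, 0 <= g i x) -> 0 <= f x) -> in_cone g f.
Proof.
elim: m g f => [|m IHm] g f Lg Lf f_ge0.
  exists (fun=> 0) => // x; rewrite big_ord0.
  by apply: scalar_ge0_eq0 => // y; apply: f_ge0 => -[].
pose g0 := g ord0; pose gs i := g (lift ord0 i).
have Lg0 : scalar g0 by exact: Lg.
have Lgs i : scalar (gs i) by exact: Lg.
have [gs_cone|] := classic (forall x, (forall i, 0 <= gs i x) -> 0 <= f x).
  have [mu mu_ge0 Ef] := IHm gs f Lgs Lf gs_cone.
  by apply: (@in_cone_lift _ g f 0 mu) => // x; rewrite Ef mul0r add0r.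
case/not_all_ex_not => x0 not_imp.
have [gs_x0 /negP] := imply_to_and _ _ not_imp; rewrite -ltNge => f_x0.
have g0_x0 : g0 x0 < 0.
  rewrite ltNge; apply/negP => g0_ge0; move: f_x0; rewrite ltNge f_ge0 // => i.
  by case: (unliftP ord0 i) => [j ->|->]; [exact: gs_x0 | exact: g0_ge0].
have g0_x0_neq0 : g0 x0 != 0 by rewrite lt_eqF.
(* [T] projects along [x0] onto the kernel of [g0]. *)
pose T x := (- (g0 x / g0 x0)) *: x0 + x.
have g0T x : g0 (T x) = 0 by rewrite Lg0; field.
have LT h : scalar h -> scalar (h \o T) by move=> Lh a u v; rewrite /= /T !Lh Lg0; field.
have [|mu mu_ge0 EfT] := IHm (fun i => gs i \o T) (f \o T) (fun i => LT _ (Lgs i)) (LT _ Lf).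
  move=> x gsT_ge0; apply: f_ge0 => i.
  by case: (unliftP ord0 i) => [j ->|->]; [exact: gsT_ge0 | rewrite -/g0 g0T].
pose S := \sum_i mu i * gs i x0.
have S_ge0 : 0 <= S by apply: sumr_ge0 => i _; apply: mulr_ge0.
apply: (@in_cone_lift _ g f ((f x0 - S) / g0 x0) mu) => // [|x].
  by apply: mulr_le0; [lra | rewrite invr_le0 ltW].
have := EfT x; rewrite /= /T Lf; set q := g0 x / g0 x0.
rewrite (eq_bigr (fun i => - q * (mu i * gs i x0) + mu i * gs i x)) => [|i _]; last first.
  by rewrite Lgs; ring.
rewrite big_split -mulr_sumr -/S => EfTx.
have -> : f x = - q * S + \sum_i mu i * gs i x + q * f x0 by rewrite -EfTx; ring.
by rewrite /q /gs /g0; field.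
Qed.

Lemma farkas (I : finType) (g : I -> V -> R) (f : V -> R) :
  (forall i, scalar (g i)) -> scalar f ->
  (forall x, (forall i, 0 <= g i x) -> 0 <= f x) -> in_cone g f.
Proof.
move=> Lg Lf f_ge0.
have [x gx_ge0|mu mu_ge0 Ef] :=
  @farkas_ord _ (fun k : 'I_#|I| => g (enum_val k)) f (fun k => Lg _) Lf.
  by apply: f_ge0 => i; rewrite -(enum_rankK i); apply: gx_ge0.
exists (fun i => mu (enum_rank i)) => // x.
rewrite Ef (reindex enum_rank); last exact: onW_bij (enum_rank_bij I).
by apply: eq_bigr => i _; rewrite enum_rankK.
Qed.

End Farkas.

Section SortedSums.
Variable R : realFieldType.

Lemma sum_by_parts (c d : nat -> R) m :
  \sum_(k < m.+1) c k * d k =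
  \sum_(j < m) (c j - c j.+1) * \sum_(k < j.+1) d k + c m * \sum_(k < m.+1) d k.
Proof.
elim: m => [|m IHm]; first by rewrite !big_ord_recr !big_ord0 /=; ring.
rewrite big_ord_recr IHm [in RHS]big_ord_recr /= [\sum_(k < m.+2) d k]big_ord_recr /=.
ring.
Qed.

Lemma sum_decreasing_mul_le0 (c d : nat -> R) n :
  (forall k, (k.+1 < n)%N -> c k.+1 < c k) ->
  (forall j, (j < n)%N -> 0 <= \sum_(k < j) d k) -> \sum_(k < n) d k = 0 ->
  \sum_(k < n) c k * d k <= 0 -> forall k, (k < n)%N -> d k = 0.
Proof.
case: n => [//|m] c_decr D_ge0 Dn_eq0.
pose D j := \sum_(k < j) d k.
have term_ge0 (j : 'I_m) : 0 <= (c j - c j.+1) * D j.+1.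
  have lt_j1m : (j.+1 < m.+1)%N by rewrite ltnS.
  by rewrite mulr_ge0 ?D_ge0 // subr_ge0 ltW // c_decr.
rewrite sum_by_parts Dn_eq0 mulr0 addr0 => sum_le0.
have sum_eq0 : \sum_(j < m) (c j - c j.+1) * D j.+1 = 0.
  by apply/le_anti; rewrite sum_le0 sumr_ge0.
have D_eq0 j : (j <= m.+1)%N -> D j = 0.
  case: j => [|j]; first by rewrite /D big_ord0.
  rewrite ltnS leq_eqVlt => /orP[/eqP-> //|lt_jm].
  have /eqP := psumr_eq0P (fun i _ => term_ge0 i) sum_eq0 (i := Ordinal lt_jm) isT.
  have lt_j1m : (j.+1 < m.+1)%N by rewrite ltnS.
  by rewrite /= mulf_eq0 subr_eq0 (gt_eqF (c_decr _ lt_j1m)) /= => /eqP.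
move=> k lt_km; have := D_eq0 k.+1 lt_km; rewrite /D big_ord_recr /=.
by rewrite -/(D k) (D_eq0 k (ltnW lt_km)) add0r.
Qed.

(* Cutting every entry at the threshold [c := s`_j] bounds any [j.+1] entries by
   [j.+1] copies of [c] plus the total excess over [c], which the first [j.+1] entries
   of the sorted [s] attain. *)
Lemma prefix_sum_le_sorted (s w : seq R) j : sorted >=%R s -> perm_eq s w ->
  (j <= size s)%N -> \sum_(i < j) w`_i <= \sum_(i < j) s`_i.
Proof.
case: j => [|j] s_sorted perm_sw lt_js; first by rewrite !big_ord0.
set c := s`_j; pose excess x := Num.max (x - c) 0.
have s_ge_c i : (i <= j)%N -> c <= s`_i.
  move=> le_ij; apply: (sorted_leq_nth ge_trans ge_refl 0 s_sorted) => //.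
  by rewrite inE (leq_ltn_trans le_ij).
have s_le_c i : (j <= i < size s)%N -> s`_i <= c.
  by case/andP=> le_ji lt_is; apply: (sorted_leq_nth ge_trans ge_refl 0 s_sorted).
have excess_ge0 x : 0 <= excess x by rewrite le_max lexx orbT.
have sum_excess (t : seq R) k : (k <= size t)%N ->
    \sum_(i < k) excess t`_i <= \sum_(x <- t) excess x.
  move=> le_kt; rewrite (big_nth 0) big_mkord (big_ord_widen _ (fun i => excess t`_i) le_kt).
  by rewrite [X in _ <= X](bigID (fun i : 'I_(size t) => (i < k)%N)) /= lerDl sumr_ge0.
have excess_s : \sum_(x <- s) excess x = \sum_(i < j.+1) (s`_i - c).
  rewrite (big_nth 0) big_mkord (big_ord_widen _ (fun i => s`_i - c) lt_js).
  rewrite (bigID (fun i : 'I_(size s) => (i < j.+1)%N)) /= [X in _ + X]big1 ?addr0.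
    by apply: eq_bigr => i lt_ij; rewrite /excess max_l // subr_ge0 s_ge_c.
  move=> i; rewrite -leqNgt => lt_ji; rewrite /excess max_r //.
  by rewrite subr_le0 s_le_c // (ltnW lt_ji) ltn_ord.
have w_le i : w`_i <= c + excess w`_i by rewrite -lerBlDl le_max lexx.
have := sum_excess w j.+1; rewrite -(perm_size perm_sw) => /(_ lt_js).
rewrite -(perm_big _ perm_sw) excess_s sumrB sumr_const card_ord.
have : \sum_(i < j.+1) w`_i <= \sum_(i < j.+1) (c + excess w`_i).
  by apply: ler_sum => i _; exact: w_le.
rewrite big_split /= sumr_const card_ord; lra.
Qed.

End SortedSums.

Lemma affine_combB (R : pzRingType) (V : lmodType R) m (w : 'I_m -> R) (v : 'I_m -> V) x :
  \sum_i w i = 1 -> \sum_i w i *: v i - x = \sum_i w i *: (v i - x).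
Proof.
move=> w_sum1; rewrite -[x in LHS]scale1r -w_sum1 scaler_suml -sumrB.
by apply: eq_bigr => i _; rewrite scalerBr.
Qed.

Section Rows.
Variables (R : realFieldType) (n : nat).
Implicit Types (a x y : 'rV[R]_n) (q : 'S_n).

Definition dot a y := \sum_i a ord0 i * y ord0 i.

Lemma dotC a y : dot a y = dot y a.
Proof. by apply: eq_bigr => i _; rewrite mulrC. Qed.

Lemma dot_is_scalar a : scalar (dot a).
Proof.
move=> c y z; rewrite /dot mulr_sumr -big_split.
by apply: eq_bigr => i _; rewrite !mxE mulrDr mulrCA.
Qed.

HB.instance Definition _ a :=
  GRing.isLinear.Build R 'rV[R]_n R^o *%R (dot a) (dot_is_scalar a).

Lemma dotDl c a b y : dot (c *: a + b) y = c * dot a y + dot b y.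
Proof. by rewrite !(dotC _ y) linearP. Qed.

Lemma dotNl a y : dot (- a) y = - dot a y.
Proof. by rewrite dotC linearN dotC. Qed.

Lemma dotBE a x y : dot a (x - y) = \sum_i a ord0 i * (x ord0 i - y ord0 i).
Proof. by apply: eq_bigr => i _; rewrite !mxE. Qed.

Definition entries_along q y := [seq y ord0 (q k) | k <- enum 'I_n].

Lemma nth_entries_along q y (k : 'I_n) : (entries_along q y)`_k = y ord0 (q k).
Proof. by rewrite (nth_map k) ?size_enum_ord // nth_ord_enum. Qed.

Lemma size_entries_along q y : size (entries_along q y) = n.
Proof. by rewrite size_map size_enum_ord. Qed.

Lemma size_sortdesc y : size (sortdesc y) = n.
Proof. by rewrite size_sort size_map size_enum_ord. Qed.

Lemma perm_sortdesc_entries q y : perm_eq (sortdesc y) (entries_along q y).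
Proof.
have -> : entries_along q y = map (y ord0) (map q (enum 'I_n)) by rewrite -map_comp.
rewrite perm_sort; apply: perm_map; apply: uniq_perm.
- exact: enum_uniq.
- by rewrite map_inj_uniq ?enum_uniq //; exact: perm_inj.
- by move=> i; rewrite mem_enum; apply/esym/mapP; exists (q^-1 i)%g; rewrite ?mem_enum ?permKV.
Qed.

Lemma sortdesc_entries y : exists q, sortdesc y = entries_along q y.
Proof.
have : perm_eq (sortdesc y) [tuple y ord0 i | i < n].
  suff -> : val [tuple y ord0 i | i < n] = entries_along 1 y by exact: perm_sortdesc_entries.
  by apply: eq_map => i; rewrite perm1.
case/tuple_permP => q -> /=; exists q.
by apply: eq_map => k; rewrite tnth_mktuple.
Qed.

Lemma sortdesc_along q y :
  (forall i j : 'I_n, j = i.+1 :> nat -> y ord0 (q j) <= y ord0 (q i)) ->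
  sortdesc y = entries_along q y.
Proof.
move=> y_decr.
have sorted_e : sorted >=%R (entries_along q y).
  apply/(sortedP 0) => k; rewrite size_map size_enum_ord => lt_k1n.
  have lt_kn := ltnW lt_k1n.
  have /= -> := nth_entries_along q y (Ordinal lt_kn).
  have /= -> := nth_entries_along q y (Ordinal lt_k1n).
  exact: y_decr.
rewrite -(sorted_sort ge_trans sorted_e); apply/(perm_sortP ge_total ge_trans ge_anti).
by rewrite -(perm_sort >=%R); exact: perm_sortdesc_entries.
Qed.

Definition prefix_sum q j y := \sum_(k < j) (entries_along q y)`_k.

Lemma prefix_sum_is_scalar q j : scalar (prefix_sum q j).
Proof.
move=> c y z; rewrite /prefix_sum mulr_sumr -big_split; apply: eq_bigr => k _ /=.
have [lt_kn|le_nk] := ltnP k n; last by rewrite !nth_default ?size_entries_along // mulr0 addr0.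
have nthE w := @nth_entries_along q w (Ordinal lt_kn).
by rewrite !nthE !mxE.
Qed.

HB.instance Definition _ q j :=
  GRing.isLinear.Build R 'rV[R]_n R^o *%R (prefix_sum q j) (prefix_sum_is_scalar q j).

Lemma prefix_sum_le_sortdesc q j y :
  (j <= n)%N -> prefix_sum q j y <= \sum_(k < j) (sortdesc y)`_k.
Proof.
move=> le_jn; apply: prefix_sum_le_sorted; rewrite ?size_sortdesc //.
  exact: sort_sorted ge_total _.
exact: perm_sortdesc_entries.
Qed.

Lemma sum_sortdesc q y : \sum_(k < n) (sortdesc y)`_k = prefix_sum q n y.
Proof.
have sum_seq (s : seq R) : size s = n -> \sum_(k < n) s`_k = \sum_(r <- s) r.
  by move=> <-; rewrite (big_nth 0) big_mkord.
rewrite /prefix_sum !sum_seq ?size_sortdesc ?size_entries_along //.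
exact/perm_big/perm_sortdesc_entries.
Qed.

Lemma prefix_sumS q y (k : 'I_n) :
  prefix_sum q k.+1 y = prefix_sum q k y + y ord0 (q k).
Proof. by rewrite /prefix_sum big_ord_recr nth_entries_along. Qed.

Lemma dot_prefix_indicator q j y : (j <= n)%N ->
  dot (\row_i (if ((q^-1)%g i < j)%N then 1 else 0)) y = prefix_sum q j y.
Proof.
move=> le_jn; rewrite /prefix_sum (big_ord_widen n _ le_jn) big_mkcond /=.
rewrite /dot (reindex_inj (@perm_inj _ q)); apply: eq_bigr => k _.
by rewrite mxE permK nth_entries_along; case: ifP; rewrite (mul1r, mul0r).
Qed.

End Rows.

Section Majorization.
Variables (R : realFieldType) (n : nat) (pi : 'S_n) (x : 'rV[R]_n).
Hypothesis x_decr : forall i j : 'I_n, j = i.+1 :> nat -> x ord0 (pi j) <= x ord0 (pi i).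
Implicit Types (a u : 'rV[R]_n) (t : R).

Lemma majorizes_of_prefix_sums u :
  (forall j, (j <= n)%N -> prefix_sum pi j x <= prefix_sum pi j u) ->
  prefix_sum pi n u = prefix_sum pi n x -> u != x ->
  majorizes u x /\ sortdesc u <> sortdesc x.
Proof.
move=> le_prefix eq_total neq_ux.
have sum_x j : \sum_(k < j) (sortdesc x)`_k = prefix_sum pi j x.
  by rewrite (sortdesc_along x_decr).
split; first split.
- move=> j /ltnW le_jn; rewrite sum_x.
  exact: le_trans (le_prefix j le_jn) (prefix_sum_le_sortdesc pi u le_jn).
- by rewrite !(sum_sortdesc pi) eq_total.
move=> eq_sort; move/eqP: neq_ux; apply; apply/rowP => i.
have eq_prefix j : (j <= n)%N -> prefix_sum pi j u = prefix_sum pi j x.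
  move=> le_jn; apply/le_anti; rewrite le_prefix // andbT -sum_x -eq_sort.
  exact: prefix_sum_le_sortdesc.
rewrite -(permKV pi i); have := prefix_sumS pi u (pi^-1 i)%g.
by rewrite !eq_prefix ?(ltnW (ltn_ord _)) // prefix_sumS => /addrI ->.
Qed.

Lemma majorizes_strict_ascent u a :
  (forall i j : 'I_n, j = i.+1 :> nat -> a ord0 (pi j) < a ord0 (pi i)) ->
  majorizes u x -> sortdesc u <> sortdesc x ->
  exists s : 'S_n, 0 < dot a (col_perm s u - x).
Proof.
move=> a_decr [maj_prefix maj_total] neq_sort.
have [p sort_u] := sortdesc_entries u.
exists (pi^-1 * p)%g; rewrite ltNge; apply/negP => dot_le0; apply: neq_sort.
pose c k := (entries_along pi a)`_k.
pose d k := (sortdesc u)`_k - (sortdesc x)`_k.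
have dot_cd : dot a (col_perm (pi^-1 * p) u - x) = \sum_(k < n) c k * d k.
  rewrite /dot (reindex_inj (@perm_inj _ pi)); apply: eq_bigr => k _.
  by rewrite /c /d sort_u (sortdesc_along x_decr) !nth_entries_along !mxE permM permK.
have c_decr k : (k.+1 < n)%N -> c k.+1 < c k.
  move=> lt_k1n; rewrite /c; have /= -> := nth_entries_along pi a (Ordinal lt_k1n).
  by have /= -> := nth_entries_along pi a (Ordinal (ltnW lt_k1n)); apply: a_decr.
have d_prefix j : (j < n)%N -> 0 <= \sum_(k < j) d k.
  by move=> lt_jn; rewrite sumrB subr_ge0 maj_prefix.
have d_total : \sum_(k < n) d k = 0 by rewrite sumrB maj_total subrr.
have d_eq0 := sum_decreasing_mul_le0 c_decr d_prefix d_total.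
apply: (@eq_from_nth _ 0); rewrite ?size_sortdesc // => k lt_kn.
by apply/eqP; rewrite -subr_eq0 -/(d k) d_eq0 // -dot_cd.
Qed.

Lemma improving_direction_of_dual y :
  (forall a t, (forall i j : 'I_n, j = i.+1 :> nat -> t <= a ord0 (pi i) - a ord0 (pi j)) ->
     t <= dot a y) ->
  [/\ forall j, (j <= n)%N -> 0 <= prefix_sum pi j y, prefix_sum pi n y = 0 & y != 0].
Proof.
move=> dual_y.
have prefix_ge0 j : (j <= n)%N -> 0 <= prefix_sum pi j y.
  move=> le_jn; rewrite -dot_prefix_indicator //; apply: dual_y => i k k_eq.
  rewrite !mxE !permK k_eq.
  case: (ltnP i.+1 j) => [lt_i1j|_]; first by rewrite (ltnW lt_i1j) subrr.
  by rewrite subr0; case: ifP => _; rewrite ?ler01.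
split=> //.
  apply/le_anti; rewrite prefix_ge0 // andbT -oppr_ge0 -dot_prefix_indicator // -dotNl.
  by apply: dual_y => i k _; rewrite !mxE !permK !ltn_ord subrr.
apply/eqP => y_eq0; suff : 1 <= dot (\row_i - ((pi^-1)%g i)%:R) y by rewrite y_eq0 linear0 ler10.
by apply: dual_y => i j j_eq; rewrite !mxE !permK j_eq -natr1; lra.
Qed.

Lemma majorizing_of_dual (Vs : seq 'rV[R]_n) (mu : 'I_(size Vs) -> R) :
  (forall k, 0 <= mu k) ->
  (forall a t, (forall i j : 'I_n, j = i.+1 :> nat -> t <= a ord0 (pi i) - a ord0 (pi j)) ->
     t <= \sum_k mu k * dot a (Vs`_k - x)) ->
  exists2 u, in_conv Vs u & majorizes u x /\ sortdesc u <> sortdesc x.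
Proof.
move=> mu_ge0 dual.
pose y := \sum_k mu k *: (Vs`_k - x).
have [a t /dual|prefix_y_ge0 prefix_y_n y_neq0] := @improving_direction_of_dual y.
  by rewrite /y linear_sum; under [X in _ -> _ <= X]eq_bigr do rewrite linearZ.
pose M := \sum_k mu k.
have M_gt0 : 0 < M.
  rewrite lt_def sumr_ge0 // andbT; apply: contra_neq y_neq0 => M_eq0.
  by rewrite /y big1 // => k _; rewrite (psumr_eq0P (fun k _ => mu_ge0 k) M_eq0) ?scale0r.
pose u := \sum_k (mu k / M) *: Vs`_k.
have weights_sum1 : \sum_k mu k / M = 1 by rewrite -mulr_suml divff ?gt_eqF.
have u_conv : in_conv Vs u.
  exists (fun k => mu k / M); split=> [k|]; last by split.
  exact: divr_ge0 (mu_ge0 k) (ltW M_gt0).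
have u_sub_x : u - x = M^-1 *: y.
  rewrite affine_combB // /y scaler_sumr; apply: eq_bigr => k _.
  by rewrite scalerA mulrC.
have prefix_ux j : prefix_sum pi j u - prefix_sum pi j x = M^-1 * prefix_sum pi j y.
  by rewrite -linearB /= u_sub_x linearZ.
exists u => //; apply: majorizes_of_prefix_sums.
- move=> j le_jn; rewrite -subr_ge0 prefix_ux.
  by apply: mulr_ge0; [rewrite invr_ge0 ltW | exact: prefix_y_ge0].
- by apply/eqP; rewrite -subr_eq0 prefix_ux prefix_y_n mulr0.
apply: contra_neq y_neq0 => u_eq_x; move: u_sub_x; rewrite u_eq_x subrr => /esym/eqP.
by rewrite scaler_eq0 invr_eq0 gt_eqF //= => /eqP.
Qed.

Lemma exists_decreasing_support (Vs : seq 'rV[R]_n) :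
  ~ (exists2 u, in_conv Vs u & majorizes u x /\ sortdesc u <> sortdesc x) ->
  exists a, (forall i j : 'I_n, j = i.+1 :> nat -> a ord0 (pi j) < a ord0 (pi i)) /\
            (forall k : 'I_(size Vs), dot a (Vs`_k - x) <= 0).
Proof.
move=> no_majorizing.
pose g (c : 'I_(size Vs) + {ij : 'I_n * 'I_n | val ij.2 == (val ij.1).+1})
       (z : 'rV[R]_n * R^o) : R :=
  match c with
  | inl k => - dot z.1 (Vs`_k - x)
  | inr ij => z.1 ord0 (pi (val ij).1) - z.1 ord0 (pi (val ij).2) - z.2
  end.
pose f (z : 'rV[R]_n * R^o) : R := - z.2.
have g_scalar c : scalar (g c).
  case: c => [k|ij] b z w /=; first by rewrite dotDl; ring.
  by rewrite !mxE -[b *: z.2]/(b * z.2); ring.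
have f_scalar : scalar f by move=> b z w; rewrite /f /= -[b *: z.2]/(b * z.2); ring.
have [cone|] := classic (forall z, (forall c, 0 <= g c z) -> 0 <= f z).
  have [mu mu_ge0 f_eq] := farkas g_scalar f_scalar cone.
  case: no_majorizing; apply: (@majorizing_of_dual Vs (fun k => mu (inl k))) => // a t t_le.
  have := f_eq (a, t); rewrite big_sumType /= /f.
  have -> : \sum_k mu (inl k) * - dot a (Vs`_k - x) = - \sum_k mu (inl k) * dot a (Vs`_k - x).
    by rewrite -sumrN; apply: eq_bigr => k _; rewrite mulrN.
  set S := (X in _ = _ + X).
  have : 0 <= S.
    apply: sumr_ge0 => -[[i j] /= adj_ij] _.
    by rewrite mulr_ge0 // subr_ge0 t_le //; apply/eqP.
  by move=> S_ge0 /=; lra.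
case/not_all_ex_not => -[a t] not_imp.
have [g_ge0 /negP] := imply_to_and _ _ not_imp; rewrite -ltNge /f /= oppr_lt0 => t_gt0.
exists a; split=> [i j adj_ij|k].
  have adj : val j == (val i).+1 by apply/eqP.
  by have := g_ge0 (inr (exist _ (i, j) adj)); rewrite /g /=; lra.
by have := g_ge0 (inl k); rewrite /g /=; lra.
Qed.

End Majorization.

Theorem mainTheorem13 (R : realFieldType) (n : nat) (P : 'rV[R]_n -> Prop)
    (x' : 'rV[R]_n) (pi : 'S_n) :
  is_polytope P -> perm_invariant P -> P x' ->
  (forall i j : 'I_n, nat_of_ord j = (nat_of_ord i).+1 ->
     x' ord0 (pi j) <= x' ord0 (pi i)) ->
  ((exists u' : 'rV[R]_n, P u' /\ majorizes u' x' /\ sortdesc u' <> sortdesc x')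
   <->
   ~ (exists a : 'rV[R]_n,
        (forall i j : 'I_n, nat_of_ord j = (nat_of_ord i).+1 ->
           a ord0 (pi j) < a ord0 (pi i)) /\
        (forall x : 'rV[R]_n, P x ->
           \sum_(i < n) a ord0 i * (x ord0 i - x' ord0 i) <= 0))).
Proof.
move=> [Vs P_conv] P_inv P_x' x'_decr; split.
  case=> u' [P_u' [maj_u' neq_sort]] [a [a_decr a_supp]].
  have [s dot_gt0] := majorizes_strict_ascent x'_decr a_decr maj_u' neq_sort.
  by move: (a_supp _ (P_inv u' s P_u')); rewrite -dotBE leNgt dot_gt0.
move=> no_support; apply: NNPP => no_majorizing; apply: no_support.
have [|a [a_decr a_supp]] := exists_decreasing_support x'_decr (Vs := Vs).
  by case=> u /P_conv P_u maj; apply: no_majorizing; exists u.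
exists a; split=> // z /P_conv [w [w_ge0 [w_sum1 ->]]].
rewrite -dotBE affine_combB // linear_sum; apply: sumr_le0 => k _.
by rewrite linearZ /=; apply: mulr_ge0_le0.
Qed.
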